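(* Let $r$ and $t$ be positive integers with $r\ge 3$ and $2\le t\le \frac{r+4}{4}$, and let $n=3r-t$. If $\rho_2(K(n,r))\ge 5$, then there exists a $2$-packing $S$ of $K(n,r)$ with $|S|=5$ such that $i_x(S)\le 2$ for every $x\in[n]$.
   Context: For integers $n\ge 2r$, the Kneser graph $K(n,r)$ has as vertices the $r$-element subsets of $[n]=\{1,\dots,n\}$, two vertices being adjacent iff they are disjoint. A $2$-packing of a graph $G$ is a set of vertices pairwise at distance at least $3$ in $G$; $\rho_2(G)$ is the maximum cardinality of a $2$-packing. For a set $S$ of vertices of $K(n,r)$ and $x\in[n]$, $i_x(S)=|\{u\in S: x\in u\}|$ is the number of vertices of $S$ containing $x$. *)

From mathcomp Require Import all_boot all_order.
Set Implicit Arguments. Unset Strict Implicit. Unset Printing Implicit Defensive.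

(* Vertices of the Kneser graph K(n,r): r-element subsets of 'I_n
   ('I_n = {0,...,n-1} plays the role of [n] = {1,...,n}). *)
Definition knv (n r : nat) := {A : {set 'I_n} | #|A| == r}.

Definition kadj (n r : nat) : rel (knv n r) :=
  fun u v => [disjoint val u & val v].

(* In a simple graph given by the relation e, dist(u,v) >= 3 means:
   u <> v, u and v are not adjacent, and they have no common neighbour
   (distance possibly infinite). *)
Definition dist_ge3 (T : finType) (e : rel T) (u v : T) : bool :=
  [&& u != v, ~~ e u v & ~~ [exists w, e u w && e w v]].

Definition two_packing (T : finType) (e : rel T) (S : {set T}) : bool :=
  [forall u in S, forall v in S, (u != v) ==> dist_ge3 e u v].

Definition rho2 (T : finType) (e : rel T) : nat :=
  \max_(S : {set T} | two_packing e S) #|S|.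

Definition ix (n r : nat) (S : {set knv n r}) (x : 'I_n) : nat :=
  #|[set u in S | x \in val u]|.

From mathcomp Require Import all_boot all_order zify.
Set Implicit Arguments. Unset Strict Implicit. Unset Printing Implicit Defensive.

(* In K(3r - t, r) two distinct vertices are at distance at least 3 exactly
   when they share between 1 and t - 1 points: their union then leaves fewer
   than r points uncovered.  By inclusion-exclusion a 2-packing of k vertices
   thus forces n >= k r - C(k,2) (t - 1).  Under this bound (and
   (k - 1)(t - 1) <= r) k vertices can be built from the pairs of a k-set:
   vertex i consists of t - 1 copies of every pair {i, j} together with
   r - (k - 1)(t - 1) points of its own.  Two vertices share exactly the
   t - 1 copies of their pair, and every point lies in at most two vertices. *)

Lemma exists_subset_card (T : finType) (A : {set T}) k :
  k <= #|A| -> exists2 B : {set T}, B \subset A & #|B| = k.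
Proof.
move=> le_kA; exists [set x in take k (enum A)].
  by apply/subsetP => x; rewrite inE => /mem_take; rewrite mem_enum.
rewrite cardsE (card_uniqP (take_uniq k (enum_uniq (mem A)))).
by rewrite size_takel // -cardE.
Qed.

Section TwoPacking.
Variables (T : finType) (e : rel T).

Lemma two_packingP (S : {set T}) :
  reflect {in S &, forall u v, u != v -> dist_ge3 e u v} (two_packing e S).
Proof.
apply: (iffP forall_inP) => [pS u v uS vS | pS u uS].
  by move: (pS u uS) => /forall_inP/(_ v vS)/implyP; apply.
by apply/forall_inP => v vS; apply/implyP; apply: pS.
Qed.

Lemma two_packingS (A B : {set T}) :
  A \subset B -> two_packing e B -> two_packing e A.
Proof.
move=> /subsetP sAB /two_packingP pB; apply/two_packingP => u v uA vA.
exact: pB (sAB u uA) (sAB v vA).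
Qed.

Lemma rho2_attained : exists2 S : {set T}, two_packing e S & #|S| = rho2 e.
Proof.
have packing0 : two_packing e set0 by apply/two_packingP => u v; rewrite inE.
have packings_gt0 : 0 < #|[pred S : {set T} | two_packing e S]|.
  by apply/card_gt0P; exists set0.
have [S pS max_S] := eq_bigmax_cond (fun S : {set T} => #|S|) packings_gt0.
by exists S => //; apply: esym.
Qed.

End TwoPacking.

Section Kneser.
Variables n r : nat.
Implicit Types u v : knv n r.

Lemma card_knv u : #|val u| = r.
Proof. exact: eqP (valP u). Qed.

Lemma kadj_common_nbr u v :
  [exists w, kadj u w && kadj w v] = (r <= #|~: (val u :|: val v)|).
Proof.
apply/existsP/idP => [[w /andP[uw wv]] | ].
  have w_out : val w \subset ~: (val u :|: val v).
    by rewrite setCU subsetI -!disjoints_subset disjoint_sym; exact/andP.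
  by apply: leq_trans (subset_leq_card w_out); rewrite card_knv.
move=> /exists_subset_card[W]; rewrite setCU subsetI => /andP[Wu Wv] /eqP cW.
exists (exist _ W cW); rewrite /kadj /= disjoint_sym.
by rewrite !disjoints_subset Wu Wv.
Qed.

Lemma kneser_dist_ge3 t u v : n = 3 * r - t -> t <= r ->
  dist_ge3 (@kadj n r) u v =
  [&& u != v, 0 < #|val u :&: val v| & #|val u :&: val v| < t].
Proof.
move=> def_n le_tr; rewrite /dist_ge3 kadj_common_nbr /kadj.
rewrite -setI_eq0 -cards_eq0 -lt0n; congr [&& _, _ & _].
have := cardsC (val u :|: val v); have := cardsUI (val u) (val v).
rewrite card_ord !card_knv; lia.
Qed.

End Kneser.

Section Bonferroni.
Variables (T : finType) (c : nat).

Lemma card_setI_bigcup_leq (A : {set T}) (s : seq {set T}) :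
  {in s, forall B, #|A :&: B| <= c} -> #|A :&: \bigcup_(B <- s) B| <= size s * c.
Proof.
elim: s => [|B s IHs] le_AB; first by rewrite big_nil setI0 cards0.
rewrite big_cons setIUr mulSn; apply: leq_trans (leq_card_setU _ _) _.
by rewrite leq_add ?le_AB ?mem_head // IHs // => X Xs; rewrite le_AB // inE Xs orbT.
Qed.

Lemma sum_card_leq_bigcup (s : seq {set T}) : uniq s ->
  {in s &, forall A B, A != B -> #|A :&: B| <= c} ->
  \sum_(A <- s) #|A| <= #|\bigcup_(A <- s) A| + 'C(size s, 2) * c.
Proof.
elim: s => [|A s IHs] /=; first by rewrite !big_nil.
case/andP=> As uniq_s le_AB; rewrite !big_cons binS bin1.
have le_s : {in s &, forall X Y, X != Y -> #|X :&: Y| <= c}.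
  by move=> X Y Xs Ys; apply: le_AB; rewrite inE ?Xs ?Ys orbT.
have le_A : #|A :&: \bigcup_(B <- s) B| <= size s * c.
  apply: card_setI_bigcup_leq => B Bs; rewrite le_AB ?mem_head ?inE ?Bs ?orbT //.
  by apply: contraNneq As => ->.
have := IHs uniq_s le_s; have := cardsUI A (\bigcup_(B <- s) B); lia.
Qed.

End Bonferroni.

Lemma kneser_packing_card r t n (S : {set knv n r}) :
  n = 3 * r - t -> t <= r -> two_packing (@kadj n r) S ->
  #|S| * r <= n + 'C(#|S|, 2) * t.-1.
Proof.
move=> def_n le_tr /two_packingP pS.
have := @sum_card_leq_bigcup _ t.-1 (map val (enum S)).
rewrite map_inj_uniq ?enum_uniq //; last exact: val_inj.
rewrite big_map big_enum /= size_map -cardE.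
under eq_bigr do rewrite card_knv.
rewrite sum_nat_const => /(_ isT) le_S.
apply: leq_trans (le_S _) _; last by rewrite leq_add2r -[n in _ <= n]card_ord max_card.
move=> _ _ /mapP[u uS ->] /mapP[v vS ->] neq_uv; rewrite !mem_enum in uS vS.
have neq : u != v by apply: contraNneq neq_uv => ->.
move: (pS u v uS vS neq); rewrite (kneser_dist_ge3 _ _ def_n le_tr).
by case/and3P=> _ _ lt_t; rewrite -ltnS (ltn_predK lt_t).
Qed.

Section SumSet.
Variables T1 T2 : finType.
Implicit Types (X : {set T1}) (Y : {set T2}).

Definition sum_set X Y : {set T1 + T2} :=
  [set z | match z with inl a => a \in X | inr b => b \in Y end].

Lemma card_sum_set X Y : #|sum_set X Y| = #|X| + #|Y|.
Proof.
rewrite -!sum1_card big_sumType.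
by congr (_ + _); apply: eq_bigl => z; rewrite inE.
Qed.

End SumSet.

Section UnorderedPairs.
Variable T : finType.

Definition upair := {p : {set T} | #|p| == 2}.

Lemma card_upair (p : upair) : #|val p| = 2.
Proof. exact: eqP (valP p). Qed.

Lemma card_upair_type : #|{: upair}| = 'C(#|T|, 2).
Proof. by rewrite card_sig -card_draws cardsE. Qed.

Lemma card_upairs_mem2 i j : i != j ->
  #|[set p : upair | (i \in val p) && (j \in val p)]| = 1.
Proof.
move=> neq_ij; have card_ij : #|[set i; j]| == 2 by rewrite cards2 neq_ij.
suff -> : [set p : upair | (i \in val p) && (j \in val p)] =
          [set exist _ [set i; j] card_ij] by rewrite cards1.
apply/setP => p; rewrite !inE; apply/andP/eqP => [[ip jp] | -> /=]; last first.
  by rewrite !inE !eqxx orbT.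
apply: val_inj; apply/eqP; rewrite /= eq_sym eqEcard subUset !sub1set ip jp.
by rewrite card_upair cards2 neq_ij.
Qed.

Lemma card_upairs_mem i : #|[set p : upair | i \in val p]| = #|T|.-1.
Proof.
(* Double count the pairs (p, j) with i, j in p and j != i. *)
have other (p : upair) :
    i \in val p -> \sum_(j | (j != i) && (j \in val p)) 1 = 1.
  move=> ip; rewrite sum1_card.
  have := cardsD1 i (val p); rewrite ip card_upair /= => -[card_pi].
  by apply: etrans (esym card_pi); apply: eq_card => j; rewrite !inE.
rewrite -sum1_card.
transitivity
  (\sum_(p : upair | i \in val p) \sum_(j | (j != i) && (j \in val p)) 1).
  by apply: eq_big => p; rewrite ?inE // => /other.
rewrite (exchange_big_dep (fun j => j != i)) /=; last by move=> p j _ /andP[].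
rewrite -(cardC1 i) -sum1_card; apply: eq_bigr => j neq_ji.
have neq_ij : i != j by rewrite eq_sym.
rewrite -[RHS](card_upairs_mem2 neq_ij) -sum1_card.
by apply: eq_bigl => p; rewrite inE neq_ji.
Qed.

End UnorderedPairs.

Section PairDesign.
Variables (T : finType) (m q : nat).

Definition design_point := (upair T * 'I_m + T * 'I_q)%type.

Definition design_block (i : T) : {set design_point} :=
  sum_set (setX [set p : upair T | i \in val p] setT) (setX [set i] setT).

Lemma card_design_point : #|{: design_point}| = 'C(#|T|, 2) * m + #|T| * q.
Proof. by rewrite card_sum !card_prod card_upair_type !card_ord. Qed.

Lemma card_design_block i : #|design_block i| = #|T|.-1 * m + q.
Proof.
by rewrite card_sum_set !cardsX card_upairs_mem cards1 !cardsT !card_ord mul1n.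
Qed.

Lemma card_design_blockI i j : i != j -> #|design_block i :&: design_block j| = m.
Proof.
move=> neq_ij.
have -> : design_block i :&: design_block j =
    sum_set (setX [set p : upair T | (i \in val p) && (j \in val p)] setT) set0.
  apply/setP => -[[p k] | [l k]]; rewrite !inE /= ?andbT //.
  by apply/negbTE; apply: contra neq_ij => /andP[/eqP <- /eqP ->].
rewrite (card_sum_set (setX _ _) set0) cardsX card_upairs_mem2 //.
by rewrite cardsT card_ord cards0 mul1n addn0.
Qed.

Lemma design_degree z : #|[set i | z \in design_block i]| <= 2.
Proof.
case: z => [[p k] | [j k]].
  have -> : [set i | inl (p, k) \in design_block i] = val p.
    by apply/setP => i; rewrite !inE andbT.
  by rewrite card_upair.
have -> : [set i | inr (j, k) \in design_block i] = [set j].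
  by apply/setP => i; rewrite !inE andbT eq_sym.
by rewrite cards1.
Qed.

End PairDesign.

Lemma degree_imset_leq (I U V : finType) (g : U -> V) (F : I -> {set U}) c :
  injective g -> (forall z, #|[set i | z \in F i]| <= c) ->
  forall x, #|[set i | x \in g @: F i]| <= c.
Proof.
move=> g_inj degF x; case: (pickP (fun z => g z == x)) => [z /eqP <- | not_gx].
  have -> : [set i | g z \in g @: F i] = [set i | z \in F i].
    by apply/setP => i; rewrite !inE mem_imset.
  exact: degF.
have -> : [set i | x \in g @: F i] = set0.
  apply/setP => i; rewrite !inE; apply/imsetP => -[z _ def_x].
  by have := not_gx z; rewrite def_x eqxx.
by rewrite cards0.
Qed.

Lemma kneser_packing_of_family (T : finType) n r t (F : T -> {set 'I_n}) :
  n = 3 * r - t -> 2 <= t -> t <= r ->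
  (forall i, #|F i| = r) -> (forall i j, i != j -> #|F i :&: F j| = t.-1) ->
  (forall x, #|[set i | x \in F i]| <= 2) ->
  exists S : {set knv n r},
    [/\ two_packing (@kadj n r) S, #|S| = #|T| & forall x, ix S x <= 2].
Proof.
move=> def_n le2t le_tr cardF cardFI degF.
pose f i : knv n r := exist _ (F i) (introT eqP (cardF i)).
have f_inj : injective f.
  move=> i j /(congr1 val) /= eqF; case: (eqVneq i j) => // neq_ij.
  by have := cardFI i j neq_ij; rewrite eqF setIid cardF; lia.
exists (f @: setT); split.
- apply/two_packingP => _ _ /imsetP[i _ ->] /imsetP[j _ ->] neq_f.
  have neq_ij : i != j by apply: contraNneq neq_f => ->.
  rewrite (kneser_dist_ge3 _ _ def_n le_tr) neq_f /= cardFI //.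
  by apply/andP; split; lia.
- by rewrite card_imset // cardsT.
- move=> x; rewrite /ix.
  have -> : [set u in f @: setT | x \in val u] = f @: [set i | x \in F i].
    apply/setP => u; rewrite inE; apply/andP/imsetP => [[/imsetP[i _ ->] xi] | [i xi ->]].
      by exists i; rewrite ?inE.
    by rewrite inE in xi; rewrite imset_f.
  by rewrite card_imset.
Qed.

Lemma kneser_balanced_packing n r t (S : {set knv n r}) :
  n = 3 * r - t -> 2 <= t -> t <= r -> #|S|.-1 * t.-1 <= r ->
  two_packing (@kadj n r) S ->
  exists S' : {set knv n r},
    [/\ two_packing (@kadj n r) S', #|S'| = #|S| & forall x, ix S' x <= 2].
Proof.
move=> def_n le2t le_tr le_design pS.
set k := #|S| in le_design *; set m := t.-1 in le_design *; set q := r - k.-1 * m.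
have le_kr := kneser_packing_card def_n le_tr pS; rewrite -/k -/m in le_kr.
have card_pts : #|{: design_point 'I_k m q}| <= n.
  (* The design has C(k,2) m + k (r - (k-1) m) = k r - C(k,2) m points. *)
  have pairs2 : 'C(k, 2) * 2 = k * k.-1.
    by rewrite -[X in _ * X = _]/(2`!) bin_ffact ffactnS ffactn1.
  have e : k * (k.-1 * m) = 'C(k, 2) * m * 2 by rewrite mulnA -pairs2 mulnAC.
  have := leq_mul2l k (k.-1 * m) r; rewrite le_design orbT e => le_2Cm.
  rewrite card_design_point card_ord mulnBr e; lia.
pose g (z : design_point 'I_k m q) : 'I_n := widen_ord card_pts (enum_rank z).
have g_inj : injective g.
  by move=> z z' /(congr1 val) /= /val_inj /enum_rank_inj.
have [|||S' [pS' cardS' degS']] :=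
  @kneser_packing_of_family _ n r t (fun i => g @: design_block m q i) def_n le2t le_tr.
- by move=> i; rewrite card_imset // card_design_block card_ord subnKC.
- move=> i j neq_ij; rewrite -imsetI; last by move=> ? ? _ _; apply: g_inj.
  by rewrite card_imset // card_design_blockI.
- exact: degree_imset_leq (@design_degree _ m q).
by exists S'; rewrite cardS' card_ord.
Qed.

Theorem lemma4p7 (r t n : nat) :
  3 <= r -> 2 <= t -> 4 * t <= r + 4 -> n = 3 * r - t ->
  5 <= rho2 (@kadj n r) ->
  exists S : {set knv n r},
    [/\ two_packing (@kadj n r) S, #|S| = 5 & forall x : 'I_n, ix S x <= 2].
Proof.
move=> _ le2t le_tr4 def_n rho_ge5.
have le_tr : t <= r by lia.
have [S0 pS0 cardS0] := rho2_attained (@kadj n r).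
have [S sub_S cardS] : exists2 S : {set knv n r}, S \subset S0 & #|S| = 5.
  by apply: exists_subset_card; rewrite cardS0.
have le_design : #|S|.-1 * t.-1 <= r by rewrite cardS; lia.
have [S' [pS' cardS' degS']] :=
  kneser_balanced_packing def_n le2t le_tr le_design (two_packingS sub_S pS0).
by exists S'; rewrite cardS' cardS.
Qed.
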